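(* Let $d > 0$ and let $$S_d^* \in \arg\max_{S \subseteq V:\ |S| \le k,\ \mathrm{div}(S) \ge d} g(S)$$ (assume this feasible family is nonempty). Let $T$ be an output of $\mathrm{GreedyIndependentSet}(V,g,d',k)$ with $0 \le d' < d/2$. Then $g(T) \ge \tfrac{1}{2}\, g(S_d^* )$.
   Context: Let $V$ be a finite set of $n$ points in a metric space with metric $\mathrm{dist}$, and let $d_{\max} = \max_{u,v \in V}\mathrm{dist}(u,v)$. For $u \in V$ and $S \subseteq V$ let $\mathrm{dist}(u,S) = \min_{v \in S}\mathrm{dist}(u,v)$, with $\mathrm{dist}(u,\emptyset) = \infty$. The max-min diversity is $\mathrm{div}(S) = \min_{u,v \in S,\, u \ne v}\mathrm{dist}(u,v)$ if $|S| \ge 2$, and $\mathrm{div}(S) = d_{\max}$ if $|S| \le 1$. Let $g : 2^V \to \mathbb{R}_{\ge 0}$ be a nonnegative monotone submodular function and $k \ge 1$ an integer. $\mathrm{GreedyIndependentSet}(V,g,d,k)$: initialize $S \gets \emptyset$; for $i = 1,\dots,k$: let $C = \{v \in V\setminus S : \mathrm{dist}(v,S) \ge d\}$; if $C = \emptyset$ return $S$; otherwise pick $t \in \arg\max_{v \in C} \big(g(S\cup\{v\}) - g(S)\big)$ (ties broken arbitrarily) and set $S \gets S \cup\{t\}$. After the loop, return $S$. *)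

(* The finite point set V is modelled as a finType T
   (the metric space restricted to V); dist : T -> T -> R is its metric. *)
From HB Require Import structures.
From mathcomp Require Import all_boot all_order all_algebra.
Set Implicit Arguments. Unset Strict Implicit. Unset Printing Implicit Defensive.
Import Order.TTheory GRing.Theory Num.Theory.
Local Open Scope ring_scope.

Section Defs.
Variables (R : realFieldType) (T : finType).

Definition is_metric (dist : T -> T -> R) : Prop :=
  [/\ forall x y, dist x y = 0 <-> x = y,
      forall x y, dist x y = dist y x &
      forall x y z, dist x z <= dist x y + dist y z].

Definition nonneg_fun (g : {set T} -> R) : Prop := forall S, 0 <= g S.
Definition monotone_fun (g : {set T} -> R) : Prop :=
  forall A B : {set T}, A \subset B -> g A <= g B.
Definition submodular (g : {set T} -> R) : Prop :=
  forall A B : {set T}, g (A :|: B) + g (A :&: B) <= g A + g B.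

(* d_max = max_{u,v in V} dist(u,v) (distances are >= 0, so 0 is a neutral start) *)
Definition dmax (dist : T -> T -> R) : R :=
  \big[Num.max/0]_(u : T) \big[Num.max/0]_(v : T) dist u v.

(* div(S) = min over distinct pairs if |S| >= 2, d_max otherwise.
   All distances are <= d_max, so d_max is a neutral start for the min. *)
Definition div (dist : T -> T -> R) (S : {set T}) : R :=
  if (2 <= #|S|)%N then
    \big[Num.min/dmax dist]_(u in S) \big[Num.min/dmax dist]_(v in S | v != u) dist u v
  else dmax dist.

(* dist(v,S) >= d, with the convention dist(v, emptyset) = +infinity:
   i.e. every u in S satisfies dist(v,u) >= d. *)
Definition dist_set_ge (dist : T -> T -> R) (v : T) (S : {set T}) (d : R) : bool :=
  [forall u in S, d <= dist v u].

Definition cand (dist : T -> T -> R) (d : R) (S : {set T}) : {set T} :=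
  [set v | (v \notin S) && dist_set_ge dist v S d].

(* greedy_run dist g d S m Out : running the remaining m iterations of
   GreedyIndependentSet from current set S can return Out (ties arbitrary). *)
Inductive greedy_run (dist : T -> T -> R) (g : {set T} -> R) (d : R) :
    {set T} -> nat -> {set T} -> Prop :=
  | greedy_done S : greedy_run dist g d S 0 S
  | greedy_empty S m : cand dist d S = set0 -> greedy_run dist g d S m.+1 S
  | greedy_pick S m t Out :
      t \in cand dist d S ->
      (forall v, v \in cand dist d S -> g (v |: S) - g S <= g (t |: S) - g S) ->
      greedy_run dist g d (t |: S) m Out ->
      greedy_run dist g d S m.+1 Out.

Definition greedy_output dist g d k (Out : {set T}) : Prop :=
  greedy_run dist g d set0 k Out.

End Defs.

From HB Require Import structures.
From mathcomp Require Import all_boot all_order all_algebra.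
From mathcomp Require Import lra.
Set Implicit Arguments. Unset Strict Implicit. Unset Printing Implicit Defensive.
Import Order.TTheory GRing.Theory Num.Theory.
Local Open Scope ring_scope.

(* Let A be the part of S* missed by the greedy output. Pairwise distances in
   A are at least d > 2d', so the element t picked at a step lies within d' of
   at most one a in A; removing that a keeps every other element of A a
   candidate for the rest of the run. Charging each a in A to the step where it
   is removed, greedy choice and diminishing returns give
   sum_(a in A) (g(Out + a) - g Out) <= g Out - g emptyset <= g Out, while
   submodularity and monotonicity give g S* - g Out <= the same sum. *)

Section Submodular.
Variables (R : realFieldType) (T : finType) (g : {set T} -> R).
Hypothesis g_submod : submodular g.

Lemma submod_gain_antimonotone (S B : {set T}) (a : T) :
  S \subset B -> a \notin B -> g (a |: B) - g B <= g (a |: S) - g S.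
Proof.
move=> sSB aNB; have := g_submod (a |: S) B.
have -> : (a |: S) :|: B = a |: B.
  by rewrite -setUA (setUidPr sSB).
have -> : (a |: S) :&: B = S.
  rewrite setIUl (setIidPl sSB); apply/setUidPr/subsetP => x.
  by rewrite !inE => /andP[/eqP-> aB]; rewrite aB in aNB.
lra.
Qed.

Lemma submod_gain_subadditive (A B : {set T}) :
  g (B :|: A) - g B <= \sum_(a in A) (g (a |: B) - g B).
Proof.
elim: {A}#|A| {-2}A (erefl #|A|) => [|n IHn] A cardA.
  by move/eqP: cardA; rewrite cards_eq0 => /eqP->; rewrite big_set0 setU0 subrr.
have /set0Pn[a aA] : A != set0 by rewrite -card_gt0 cardA.
rewrite (big_setD1 a aA) /=.
have cardAa : #|A :\ a| = n by move: cardA; rewrite (cardsD1 a A) aA => -[].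
have := IHn _ cardAa; have := g_submod (a |: B) (B :|: A :\ a).
have -> : (a |: B) :|: (B :|: A :\ a) = B :|: A.
  apply/setP => x; rewrite !inE.
  by case: (x =P a) => [->|_]; rewrite ?aA ?orbT //; case: (x \in B).
have -> : (a |: B) :&: (B :|: A :\ a) = B.
  by apply/setP => x; rewrite !inE; case: (x =P a) => [->|_]; case: (_ \in B).
lra.
Qed.

End Submodular.

Section Diversity.
Variables (R : realFieldType) (T : finType) (dist : T -> T -> R).

Definition separated (d : R) (A : {set T}) : Prop :=
  forall a b, a \in A -> b \in A -> a != b -> d <= dist a b.

Lemma separated_div (S : {set T}) : separated (div dist S) S.
Proof.
move=> a b aS bS ab; rewrite /div.
have -> : (2 <= #|S|)%N by apply/card_gt1P; exists a, b.
rewrite (bigD1 a) //= ge_min (bigD1 b) /= ?bS 1?eq_sym ?ab //.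
by rewrite ge_min lexx.
Qed.

Lemma separated_sub (d : R) (A B : {set T}) :
  A \subset B -> separated d B -> separated d A.
Proof. by move=> sAB sepB a b aA bA; apply: sepB; apply: (subsetP sAB). Qed.

Hypothesis dist_metric : is_metric dist.

(* By the triangle inequality, two points within d' < d/2 of t are closer than d. *)
Lemma separated_near_unique (d d' : R) (A : {set T}) (t : T) :
  d' < d / 2 -> separated d A -> A != set0 ->
  exists2 a0, a0 \in A & forall a, a \in A -> a != a0 -> d' <= dist a t.
Proof.
case: dist_metric => _ dist_sym dist_tri hd sepA /set0Pn[a1 a1A].
case: (boolP [exists a in A, dist a t < d']) => [/exists_inP[a0 a0A a0t] | far].
  exists a0 => // a aA aa0; rewrite leNgt; apply/negP => at'.
  have := sepA _ _ aA a0A aa0; have := dist_tri a t a0.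
  rewrite (dist_sym t a0); lra.
exists a1 => // a aA _; rewrite leNgt; apply: contra far => at'.
by apply/exists_inP; exists a.
Qed.

End Diversity.

Section Greedy.
Variables (R : realFieldType) (T : finType) (dist : T -> T -> R).
Variables (g : {set T} -> R) (d d' : R).

Lemma greedy_run_sub S m Out : greedy_run dist g d' S m Out -> S \subset Out.
Proof.
by elim=> // S0 m0 t Out0 _ _ _; apply: subset_trans; apply: subsetUr.
Qed.

Hypotheses (dist_metric : is_metric dist) (g_mono : monotone_fun g).
Hypotheses (g_submod : submodular g) (hd : d' < d / 2).

(* Induction along the run: the candidate a0 near the picked t is paid for by
   the greedy gain at this step, the rest of A by the remaining run. *)
Lemma greedy_run_gain S m Out (A : {set T}) :
  greedy_run dist g d' S m Out ->
  separated dist d A -> [disjoint A & Out] -> A \subset cand dist d' S ->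
  (#|A| <= m)%N ->
  \sum_(a in A) (g (a |: Out) - g Out) <= g Out - g S.
Proof.
move=> run; elim: run A => {S m Out}.
- move=> S A _ _ _; rewrite leqn0 cards_eq0 => /eqP->.
  by rewrite big_set0 subrr.
- move=> S m candS A _ _; rewrite candS subset0 => /eqP-> _.
  by rewrite big_set0 subrr.
move=> S m t Out tcand tmax run IH A sepA disjA sAcand cardA.
have sOut : t |: S \subset Out by apply: greedy_run_sub run.
have gSOut : g (t |: S) <= g Out by apply: g_mono.
have [->|A0] := eqVneq A set0.
  by rewrite big_set0 subr_ge0; apply: g_mono (subset_trans (subsetUr _ _) sOut).
have [a0 a0A farA] := separated_near_unique dist_metric t hd sepA A0.
rewrite (big_setD1 a0 a0A) /=.
have gain_rest : \sum_(a in A :\ a0) (g (a |: Out) - g Out) <= g Out - g (t |: S).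
  apply: IH.
  - by apply: separated_sub sepA; apply: subD1set.
  - by apply: disjointWl disjA; apply: subD1set.
  - apply/subsetP => a; rewrite !inE => /andP[aa0 aA].
    have := subsetP sAcand a aA; rewrite inE => /andP[aS /forall_inP aF].
    have aNOut : a \notin Out by rewrite (disjointFr disjA aA).
    rewrite negb_or aS andbT; apply/andP; split.
      by apply: contraNneq aNOut => ->; rewrite (subsetP sOut) // setU11.
    by apply/forall_inP => u /setU1P[->|uS]; [apply: farA | apply: aF].
  - by move: cardA; rewrite (cardsD1 a0 A) a0A.
have gain_a0 : g (a0 |: Out) - g Out <= g (a0 |: S) - g S.
  apply: submod_gain_antimonotone => //; last by rewrite (disjointFr disjA a0A).
  by apply: subset_trans sOut; apply: subsetUr.
have := tmax a0 (subsetP sAcand a0 a0A); lra.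
Qed.

End Greedy.

Theorem lemma3p2 (R : realFieldType) (V : finType) (dist : V -> V -> R)
    (g : {set V} -> R) (k : nat) (d d' : R) (Sstar Out : {set V}) :
  is_metric dist -> nonneg_fun g -> monotone_fun g -> submodular g ->
  (1 <= k)%N -> 0 < d ->
  (#|Sstar| <= k)%N -> d <= div dist Sstar ->
  (forall S : {set V}, (#|S| <= k)%N -> d <= div dist S -> g S <= g Sstar) ->
  0 <= d' -> d' < d / 2 ->
  greedy_output dist g d' k Out ->
  g Sstar / 2 <= g Out.
Proof.
move=> metric g_ge0 g_mono g_submod _ _ cardS divS _ _ hd run.
set A := Sstar :\: Out.
have gain_greedy : \sum_(a in A) (g (a |: Out) - g Out) <= g Out - g set0.
  apply: (greedy_run_gain metric g_mono g_submod hd run).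
  - apply: separated_sub (subsetDl _ _) _ => a b aS bS ab.
    by apply: le_trans divS _; apply: separated_div.
  - by rewrite disjoints_subset /A setDE subsetIr.
  - by apply/subsetP => a _; rewrite inE in_set0; apply/forall_inP => u; rewrite inE.
  - by apply: leq_trans cardS; apply: subset_leq_card; apply: subsetDl.
have gain_total := submod_gain_subadditive g_submod A Out.
have SstarOut : g Sstar <= g (Out :|: A).
  by apply: g_mono; apply/subsetP => x xS; rewrite /A !inE xS andbT orbN.
have := g_ge0 set0; lra.
Qed.
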